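(* Let $k>5$ and suppose the canonical system $\mathcal D$ of all splits of $(R^1,R^2)$ has a maximally-connected coupling $r=(r_{ij})$. Then for every $m$ with $2<m\le k/2$ and every $W=\{i_1,\dots,i_m\}\subset\{1,\dots,k\}$, the probability that the corresponding $m$-split equals $1$ in both bunches is determined by the 1-splits and 2-splits, namely $$\min\Big(\sum_{j=1}^m p_{i_j},\sum_{j=1}^m q_{i_j}\Big)=\sum_{j=1}^{m}\min(p_{i_j},q_{i_j})+\sum_{j=1}^{m-1}\sum_{j'=j+1}^{m}\Big[\min(p_{i_j}+p_{i_{j'}},q_{i_j}+q_{i_{j'}})-\min(p_{i_j},q_{i_j})-\min(p_{i_{j'}},q_{i_{j'}})\Big].$$
   Context: Let $R^1,R^2$ be two stochastically unrelated random variables with values in $\{1,\dots,k\}$, $\Pr[R^1=i]=p_i$, $\Pr[R^2=i]=q_i$, where $p_i,q_i\ge0$ and $\sum_i p_i=\sum_i q_i=1$. For $W\subseteq\{1,\dots,k\}$ write $p(W)=\sum_{i\in W}p_i$, $q(W)=\sum_{i\in W}q_i$. For every nonempty proper subset $W$ (with $W$ and its complement identified), the split $D^c_W$ ($c=1,2$) equals $1$ iff $R^c\in W$; it is called an $m$-split if $|W|=m$. The canonical system $\mathcal D$ consists of all splits of $R^1$ (one bunch) and of $R^2$ (another bunch). A coupling of $\mathcal D$ amounts to a $k\times k$ matrix $r=(r_{ij})$ of nonnegative reals with row sums $p_i$ and column sums $q_j$. It is maximally connected if for every $W$ the pair of splits under $r$ is a maximal coupling of $D^1_W,D^2_W$,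 equivalently $\sum_{i,j\in W} r_{ij}=\min(p(W),q(W))$ for every nonempty proper $W$. *)

From HB Require Import structures.
From mathcomp Require Import all_boot all_order all_algebra.
Set Implicit Arguments. Unset Strict Implicit. Unset Printing Implicit Defensive.
Import Order.TTheory GRing.Theory Num.Theory.
Local Open Scope ring_scope.

Definition is_distr (R : realFieldType) (k : nat) (p : 'I_k -> R) : Prop :=
  (forall i, 0 <= p i) /\ \sum_(i < k) p i = 1.

Definition mass (R : realFieldType) (k : nat) (p : 'I_k -> R) (W : {set 'I_k}) : R :=
  \sum_(i in W) p i.

Definition is_coupling (R : realFieldType) (k : nat) (p q : 'I_k -> R)
    (r : 'M[R]_k) : Prop :=
  (forall i j, 0 <= r i j) /\
  (forall i, \sum_(j < k) r i j = p i) /\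
  (forall j, \sum_(i < k) r i j = q j).

(* Maximally connected: for every nonempty proper W, the pair of splits
   D^1_W, D^2_W is maximally coupled, i.e. sum_{i,j in W} r_ij = min(p(W),q(W)). *)
Definition maximally_connected (R : realFieldType) (k : nat) (p q : 'I_k -> R)
    (r : 'M[R]_k) : Prop :=
  is_coupling p q r /\
  forall W : {set 'I_k}, W != set0 -> W != setT ->
    \sum_(i in W) \sum_(j in W) r i j = Num.min (mass p W) (mass q W).

From HB Require Import structures.
From mathcomp Require Import all_boot all_order all_algebra.
From mathcomp Require Import ring.
Set Implicit Arguments. Unset Strict Implicit. Unset Printing Implicit Defensive.
Import Order.TTheory GRing.Theory Num.Theory.
Local Open Scope ring_scope.

(* The mass of W on both bunches is the sum of the entries r_ij with i, j in W.
   The diagonal entries r_ii are fixed by the 1-splits, and each symmetric pair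
   r_ij + r_ji (i < j) by the 2-split {i, j} once the diagonal is subtracted;
   splitting the double sum over W into its diagonal and the pairs i < j gives
   the formula. *)

Lemma pair_sum_diag_offdiag (V : nmodType) (k : nat) (F : 'I_k -> 'I_k -> V)
    (W : {set 'I_k}) :
  \sum_(i in W) \sum_(j in W) F i j =
    \sum_(i in W) F i i + \sum_(i in W) \sum_(j in W | (i < j)%N) (F i j + F j i).
Proof.
have row_split i : i \in W -> \sum_(j in W) F i j =
    F i i + \sum_(j in W | (i < j)%N) F i j + \sum_(j in W | (j < i)%N) F i j.
  move=> iW; rewrite (bigD1 i) //= (bigID (fun j : 'I_k => (i < j)%N)) /= addrA.
  congr (_ + _ + _); apply: eq_bigl => j; rewrite -!andbA; congr (_ && _);
    by rewrite -(inj_eq val_inj) /=; case: ltngtP.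
rewrite (eq_bigr _ row_split) !big_split /= -addrA; congr (_ + _).
under [in RHS]eq_bigr do rewrite big_split /=.
rewrite big_split /=; congr (_ + _).
rewrite (exchange_big_dep (fun j : 'I_k => j \in W)) /=; last by move=> ? ? ? /andP[].
by apply: eq_bigr => j jW; apply: eq_bigl => i; rewrite jW.
Qed.

Section MaximallyConnected.

Variables (R : realFieldType) (k : nat) (p q : 'I_k -> R) (r : 'M[R]_k).
Hypothesis r_maxconn : maximally_connected p q r.

Lemma maxconn_mass (W : {set 'I_k}) : (0 < #|W| < k)%N ->
  \sum_(i in W) \sum_(j in W) r i j = Num.min (mass p W) (mass q W).
Proof.
case/andP=> W_gt0 W_ltk; apply: r_maxconn.2; first by rewrite -card_gt0.
by apply: contraTneq W_ltk => ->; rewrite cardsT card_ord ltnn.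
Qed.

Lemma maxconn_diag (i : 'I_k) : (1 < k)%N -> r i i = Num.min (p i) (q i).
Proof.
move=> k_gt1; have := maxconn_mass (W := [set i]).
by rewrite cards1 k_gt1 /mass !big_set1; apply.
Qed.

Lemma maxconn_pair (i j : 'I_k) : (2 < k)%N -> i != j ->
  r i j + r j i =
    Num.min (p i + p j) (q i + q j) - Num.min (p i) (q i) - Num.min (p j) (q j).
Proof.
move=> k_gt2 ij; have k_gt1 : (1 < k)%N by apply: ltnW.
have i_notin : i \notin [set j] by rewrite in_set1.
have := maxconn_mass (W := i |: [set j]).
rewrite cardsU1 i_notin cards1 k_gt2 => /(_ isT).
rewrite /mass !big_setU1 //= !big_set1 big_setU1 //= big_set1 => <-.
rewrite -(maxconn_diag i k_gt1) -(maxconn_diag j k_gt1).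
ring.
Qed.

End MaximallyConnected.

Theorem theorem4 (R : realFieldType) (k : nat) (p q : 'I_k -> R) :
  (5 < k)%N ->
  is_distr p -> is_distr q ->
  (exists r : 'M[R]_k, maximally_connected p q r) ->
  forall W : {set 'I_k}, (2 < #|W|)%N -> (#|W|.*2 <= k)%N ->
    Num.min (mass p W) (mass q W) =
      \sum_(i in W) Num.min (p i) (q i)
    + \sum_(i in W) \sum_(j in W | (i < j)%N)
        (Num.min (p i + p j) (q i + q j) - Num.min (p i) (q i)
           - Num.min (p j) (q j)).
Proof.
move=> k_gt5 _ _ [r r_maxconn] W W_gt2 W_half.
have k_gt2 : (2 < k)%N by apply: ltn_trans k_gt5.
have k_gt1 : (1 < k)%N by apply: ltnW.
have W_bounds : (0 < #|W| < k)%N.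
  rewrite (ltn_trans _ W_gt2) //=; apply: leq_trans W_half.
  by rewrite -addnn -addn1 leq_add2l (ltn_trans _ W_gt2).
rewrite -(maxconn_mass r_maxconn W_bounds).
rewrite pair_sum_diag_offdiag; congr (_ + _).
  by apply: eq_bigr => i _; rewrite (maxconn_diag r_maxconn).
apply: eq_bigr => i _; apply: eq_bigr => j /andP[_ ij].
by rewrite (maxconn_pair r_maxconn) // -(inj_eq val_inj) /= neq_ltn ij.
Qed.
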